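(* Let $\mathbb{X}$ be a Cartesian closed $k$-differential category and $C$ an object of $\mathbb{X}$. Then the reader monad $\mathbb{R}(C)=([C,-],\mu^C,\eta^C)$ is a Cartesian $k$-differential monad on $\mathbb{X}$, where $[C,-](A)=[C,A]$, $[C,f]=\lambda(f\circ\mathrm{ev}_{C,A})$ for $f:A\to B$, $\eta^C_A=\lambda(\pi_2):A\to[C,A]$ (with $\pi_2:C\times A\to A$), and $\mu^C_A=\lambda(\mathrm{ev}_{C,A}\circ\langle\pi_1,\mathrm{ev}_{C,[C,A]}\rangle):[C,[C,A]]\to[C,A]$. (In term notation: $[C,f](g)=\lambda x.f(g(x))$, $\mu^C_A(F)=\lambda x.F(x)(x)$, $\eta^C_A(a)=\lambda x.a$.)
   Context: Fix a commutative semiring $k$. A left $k$-linear category is a category $\mathbb{X}$ in which each hom-set $\mathbb{X}(A,B)$ is a $k$-module (scalar multiplication $r\cdot f$, addition $+$, zero $0$) such that precomposition is $k$-linear: $(r\cdot f+s\cdot g)\circ x=r\cdot(f\circ x)+s\cdot(g\circ x)$. A map $f$ is $k$-linear if $f\circ(r\cdot x+s\cdot y)=r\cdot(f\circ x)+s\cdot(f\circ y)$ for all suitable $x,y$ and $r,s\in k$. A Cartesian left $k$-linear category is a left $k$-linear category with finite products (terminal object $\ast$, projections $\pi_j:A_1\times\cdots\times A_n\to A_j$, pairing $\langle-,\dots,-\rangle$) in which all projections are $k$-linear. A Cartesian $k$-differential category is a Cartesian left $k$-linear category equipped with a differential combinator $\mathsf{D}$ assigning to each $f:A\to B$ a map $\mathsf{D}[f]:A\times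 A\to B$ such that: [CD.1] $\mathsf{D}[r\cdot f+s\cdot g]=r\cdot\mathsf{D}[f]+s\cdot\mathsf{D}[g]$; [CD.2] $\mathsf{D}[f]\circ\langle\pi_1,r\cdot\pi_2+s\cdot\pi_3\rangle=r\cdot(\mathsf{D}[f]\circ\langle\pi_1,\pi_2\rangle)+s\cdot(\mathsf{D}[f]\circ\langle\pi_1,\pi_3\rangle)$ (as maps $A\times A\times A\to B$); [CD.3] $\mathsf{D}[1_A]=\pi_2$ and, for $\pi_j:A_1\times\cdots\times A_n\to A_j$, $\mathsf{D}[\pi_j]=\pi_{n+j}$; [CD.4] $\mathsf{D}[\langle f_1,\dots,f_n\rangle]=\langle\mathsf{D}[f_1],\dots,\mathsf{D}[f_n]\rangle$; [CD.5] $\mathsf{D}[g\circ f]=\mathsf{D}[g]\circ\langle f\circ\pi_1,\mathsf{D}[f]\rangle$; [CD.6] $\mathsf{D}[\mathsf{D}[f]]\circ\langle\pi_1,0,0,\pi_2\rangle=\mathsf{D}[f]$; [CD.7] $\mathsf{D}[\mathsf{D}[f]]\circ\langle\pi_1,\pi_2,\pi_3,\pi_4\rangle=\mathsf{D}[\mathsf{D}[f]]\circ\langle\pi_1,\pi_3,\pi_2,\pi_4\rangle$ (identifying $(A\times A)\times(A\times A)$ with $A\times A\times A\times A$). A map $f$ is $\mathsf{D}$-linear if $\mathsf{D}[f]=f\circ\pi_2$. For Cartesian left $k$-linear categories $\mathbb{X},\mathbb{Y}$, a strong Cartesian $k$-linear functor is a functor $\mathsf{F}:\mathbb{X}\to\mathbb{Y}$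 such that $\mathsf{F}(\ast)\to\ast$ is an isomorphism, the canonical maps $\omega_{A_1,\dots,A_n}=\langle\mathsf{F}(\pi_1),\dots,\mathsf{F}(\pi_n)\rangle:\mathsf{F}(A_1\times\cdots\times A_n)\to\mathsf{F}(A_1)\times\cdots\times\mathsf{F}(A_n)$ are isomorphisms, and $\mathsf{F}(r\cdot f+s\cdot g)=r\cdot\mathsf{F}(f)+s\cdot\mathsf{F}(g)$. For Cartesian $k$-differential categories, a strong Cartesian $k$-differential functor is a strong Cartesian $k$-linear functor with $\mathsf{D}[\mathsf{F}(f)]=\mathsf{F}(\mathsf{D}[f])\circ\omega^{-1}_{A,A}$ for all $f:A\to B$. A Cartesian $k$-differential monad on a Cartesian $k$-differential category $\mathbb{X}$ is a monad $\mathbb{S}=(\mathsf{S},\mu,\eta)$ on $\mathbb{X}$ such that $\mathsf{S}$ is a strong Cartesian $k$-differential functor and every $\eta_A$ and $\mu_A$ is $\mathsf{D}$-linear. A Cartesian closed $k$-differential category is a Cartesian $k$-differential category $\mathbb{X}$ which is Cartesian closed, with internal hom $[C,B]$, evaluation $\mathrm{ev}_{C,B}:C\times[C,B]\to B$ and currying bijection $\lambda:\mathbb{X}(C\times A,B)\to\mathbb{X}(A,[C,B])$, such that currying is compatible with the $k$-linear structure ($\lambda(r\cdot f+s\cdot g)=r\cdot\lambda(f)+s\cdot\lambda(g)$) and with the differential combinator: for $f:C\times A\to B$, $\mathsf{D}[\lambda(f)]=\lambda\big(\mathsf{D}[f]\circ\langle\langle\pi_1,\pi_2\rangle,\langle 0,\pi_3\rangle\rangle\big)$,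 where the right-hand side curries the map $C\times A\times A\to B$, $(c,a,b)\mapsto\mathsf{D}[f]((c,a),(0,b))$ (the partial derivative of $f$ in its second argument). In term notation: $\frac{\mathsf{d}\,\lambda y.f(y,x)}{\mathsf{d}x}(a)\cdot b=\lambda y.\frac{\mathsf{d}f(y,x)}{\mathsf{d}x}(a)\cdot b$. *)

From mathcomp Require Import all_boot all_algebra.
Import GRing.Theory.
Set Implicit Arguments. Unset Strict Implicit. Unset Printing Implicit Defensive.
Local Open Scope ring_scope.

(* Raw data of a Cartesian closed left k-linear category with a
   differential combinator.  Finite products are given by a terminal
   object and binary products (n-ary products are iterated). *)
Record ccdc_data (k : comPzSemiRingType) := CCDCData {
  ob : Type;
  hom : ob -> ob -> Type;
  idm : forall A, hom A A;
  comp : forall A B C, hom B C -> hom A B -> hom A C;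
  hzero : forall A B, hom A B;
  hadd : forall A B, hom A B -> hom A B -> hom A B;
  hscale : forall A B, k -> hom A B -> hom A B;
  term : ob;
  bang : forall A, hom A term;
  prod : ob -> ob -> ob;
  p1 : forall A B, hom (prod A B) A;
  p2 : forall A B, hom (prod A B) B;
  pair : forall A B C, hom C A -> hom C B -> hom C (prod A B);
  D : forall A B, hom A B -> hom (prod A A) B;
  exp : ob -> ob -> ob;
  ev : forall C B, hom (prod C (exp C B)) B;
  lam : forall C A B, hom (prod C A) B -> hom A (exp C B)
}.

Arguments ob {k}.
Arguments hom {k c}.
Arguments idm {k c}.
Arguments comp {k c A B C}.
Arguments hzero {k c A B}.
Arguments hadd {k c A B}.
Arguments hscale {k c A B}.
Arguments term {k c}.
Arguments bang {k c}.
Arguments prod {k c}.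
Arguments p1 {k c A B}.
Arguments p2 {k c A B}.
Arguments pair {k c A B C}.
Arguments D {k c A B}.
Arguments exp {k c}.
Arguments ev {k c C B}.
Arguments lam {k c C A B}.

Section CCDC.
Variables (k : comPzSemiRingType) (X : ccdc_data k).

Local Notation "g ∘ f" := (comp g f) (at level 40, left associativity).
Local Notation "r *h f" := (hscale r f) (at level 35, right associativity).
Local Notation "f +h g" := (hadd f g) (at level 50, left associativity).
Local Notation "0h" := hzero.

Definition is_category : Prop :=
  (forall (A B C E : ob X) (h : hom C E) (g : hom B C) (f : hom A B),
      h ∘ (g ∘ f) = (h ∘ g) ∘ f) /\
  (forall (A B : ob X) (f : hom A B), idm B ∘ f = f) /\
  (forall (A B : ob X) (f : hom A B), f ∘ idm A = f).

Definition hom_modules : Prop :=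
  forall A B : ob X,
  (forall f g h : hom A B, f +h (g +h h) = (f +h g) +h h) /\
  (forall f g : hom A B, f +h g = g +h f) /\
  (forall f : hom A B, 0h +h f = f) /\
  (forall (r : k) (f g : hom A B), r *h (f +h g) = r *h f +h r *h g) /\
  (forall (r s : k) (f : hom A B), (r + s) *h f = r *h f +h s *h f) /\
  (forall (r s : k) (f : hom A B), (r * s) *h f = r *h (s *h f)) /\
  (forall f : hom A B, 1 *h f = f) /\
  (forall f : hom A B, 0 *h f = 0h) /\
  (forall r : k, r *h (0h : hom A B) = 0h).

Definition left_linear : Prop :=
  forall (A B C : ob X) (f g : hom B C) (x : hom A B) (r s : k),
    (r *h f +h s *h g) ∘ x = r *h (f ∘ x) +h s *h (g ∘ x).

Definition k_linear_map (B C : ob X) (f : hom B C) : Prop :=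
  forall (A : ob X) (x y : hom A B) (r s : k),
    f ∘ (r *h x +h s *h y) = r *h (f ∘ x) +h s *h (f ∘ y).

Definition cartesian : Prop :=
  (forall (A : ob X) (h : hom A term), h = bang A) /\
  (forall (A B C : ob X) (f : hom C A) (g : hom C B), p1 ∘ pair f g = f) /\
  (forall (A B C : ob X) (f : hom C A) (g : hom C B), p2 ∘ pair f g = g) /\
  (forall (A B C : ob X) (h : hom C (prod A B)), pair (p1 ∘ h) (p2 ∘ h) = h) /\
  (forall A B : ob X, k_linear_map (@p1 _ X A B)) /\
  (forall A B : ob X, k_linear_map (@p2 _ X A B)).

(* axioms [CD.1]--[CD.7] (binary-product form) *)
Definition differential_axioms : Prop :=
  (forall (A B : ob X) (f g : hom A B) (r s : k),
      D (r *h f +h s *h g) = r *h D f +h s *h D g) /\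
  (* CD.2, on (A x A) x A with pi1 = p1 p1, pi2 = p2 p1, pi3 = p2 *)
  (forall (A B : ob X) (f : hom A B) (r s : k),
      let q1 := p1 ∘ (@p1 _ X (prod A A) A) in
      let q2 := p2 ∘ (@p1 _ X (prod A A) A) in
      let q3 := (@p2 _ X (prod A A) A) in
      D f ∘ pair q1 (r *h q2 +h s *h q3)
      = r *h (D f ∘ pair q1 q2) +h s *h (D f ∘ pair q1 q3)) /\
  (forall A : ob X, D (idm A) = p2) /\
  (forall A B : ob X, D (@p1 _ X A B) = p1 ∘ p2) /\
  (forall A B : ob X, D (@p2 _ X A B) = p2 ∘ p2) /\
  (forall (A B C : ob X) (f : hom C A) (g : hom C B),
      D (pair f g) = pair (D f) (D g)) /\
  (forall (A B C : ob X) (f : hom A B) (g : hom B C),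
      D (g ∘ f) = D g ∘ pair (f ∘ p1) (D f)) /\
  (forall (A B : ob X) (f : hom A B),
      D (D f) ∘ pair (pair p1 0h) (pair 0h p2) = D f) /\
  (* CD.7 : symmetry of the second derivative *)
  (forall (A B : ob X) (f : hom A B),
      let P := prod (prod A A) (prod A A) in
      D (D f) ∘ pair (pair (p1 ∘ (@p1 _ X _ _ : hom P _)) (p1 ∘ (@p2 _ X _ _ : hom P _)))
                     (pair (p2 ∘ (@p1 _ X _ _ : hom P _)) (p2 ∘ (@p2 _ X _ _ : hom P _)))
      = D (D f)).

Definition closed_differential : Prop :=
  (forall (C A B : ob X) (f : hom (prod C A) B),
      ev ∘ pair p1 (lam f ∘ p2) = f) /\
  (forall (C A B : ob X) (g : hom A (exp C B)),
      lam (ev ∘ pair p1 (g ∘ p2)) = g) /\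
  (forall (C A B : ob X) (f g : hom (prod C A) B) (r s : k),
      lam (r *h f +h s *h g) = r *h lam f +h s *h lam g) /\
  (forall (C A B : ob X) (f : hom (prod C A) B),
      D (lam f) =
      lam (D f ∘ pair (pair p1 (p1 ∘ p2)) (pair 0h (p2 ∘ p2)))).

Definition is_CCDC : Prop :=
  is_category /\ hom_modules /\ left_linear /\ cartesian /\
  differential_axioms /\ closed_differential.

Definition is_iso (A B : ob X) (f : hom A B) : Prop :=
  exists g : hom B A, g ∘ f = idm A /\ f ∘ g = idm B.

Section Functor.
Variables (Fo : ob X -> ob X) (Fm : forall A B : ob X, hom A B -> hom (Fo A) (Fo B)).
Arguments Fm {A B}.

Definition omega (A B : ob X) : hom (Fo (prod A B)) (prod (Fo A) (Fo B)) :=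
  pair (Fm p1) (Fm p2).

Definition is_endofunctor : Prop :=
  (forall A : ob X, Fm (idm A) = idm (Fo A)) /\
  (forall (A B C : ob X) (f : hom A B) (g : hom B C), Fm (g ∘ f) = Fm g ∘ Fm f).

Definition strong_cartesian_linear : Prop :=
  is_endofunctor /\
  is_iso (bang (Fo term)) /\
  (forall A B : ob X, is_iso (omega A B)) /\
  (forall (A B : ob X) (f g : hom A B) (r s : k),
      Fm (r *h f +h s *h g) = r *h Fm f +h s *h Fm g).

Definition strong_cartesian_differential : Prop :=
  strong_cartesian_linear /\
  (forall (A B : ob X) (f : hom A B) (w : hom (prod (Fo A) (Fo A)) (Fo (prod A A))),
      w ∘ omega A A = idm _ -> omega A A ∘ w = idm _ ->
      D (Fm f) = Fm (D f) ∘ w).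

Definition D_linear (A B : ob X) (f : hom A B) : Prop := D f = f ∘ p2.

Variables (mu : forall A : ob X, hom (Fo (Fo A)) (Fo A))
          (eta : forall A : ob X, hom A (Fo A)).

Definition is_monad : Prop :=
  is_endofunctor /\
  (forall (A B : ob X) (f : hom A B), eta B ∘ f = Fm f ∘ eta A) /\
  (forall (A B : ob X) (f : hom A B), mu B ∘ Fm (Fm f) = Fm f ∘ mu A) /\
  (forall A : ob X, mu A ∘ Fm (mu A) = mu A ∘ mu (Fo A)) /\
  (forall A : ob X, mu A ∘ eta (Fo A) = idm (Fo A)) /\
  (forall A : ob X, mu A ∘ Fm (eta A) = idm (Fo A)).

Definition is_cart_diff_monad : Prop :=
  is_monad /\ strong_cartesian_differential /\
  (forall A : ob X, D_linear (eta A)) /\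
  (forall A : ob X, D_linear (mu A)).
End Functor.

Section Reader.
Variable C : ob X.
Definition reader_Fo (A : ob X) : ob X := exp C A.
Definition reader_Fm (A B : ob X) (f : hom A B) : hom (exp C A) (exp C B) :=
  lam (f ∘ (@ev _ X C A)).
Definition reader_eta (A : ob X) : hom A (exp C A) :=
  lam (@p2 _ X C A).
Definition reader_mu (A : ob X) : hom (exp C (exp C A)) (exp C A) :=
  lam ((@ev _ X C A) ∘ pair p1 (@ev _ X C (exp C A))).
End Reader.

End CCDC.

Arguments is_cart_diff_monad {k X} Fo Fm mu eta.
Arguments reader_Fo {k X} C A.
Arguments reader_Fm {k X} C A B f.
Arguments reader_eta {k X} C A.
Arguments reader_mu {k X} C A.
Arguments is_CCDC {k} X.

(* Every required equation is an equation between maps built from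
   composition, pairing, projections, evaluation and currying.
   The one genuinely differential fact is [D_ev_partial]: the partial
   derivative of evaluation in its function argument is evaluation of the
   direction; it follows from compatibility of D with currying applied to
   [lam ev = 1] and [D 1 = pi_2]. *)
From Pilot Require Import Defs.
From mathcomp Require Import all_boot all_algebra.
(* Re-import so that [hom], [comp], [pair], ... refer to the category. *)
Import Defs.

Set Implicit Arguments. Unset Strict Implicit. Unset Printing Implicit Defensive.

Section ReaderMonad.
Variables (k : comPzSemiRingType) (X : ccdc_data k).
Hypothesis HX : is_CCDC X.

Local Notation "g ∘ f" := (comp g f) (at level 40, left associativity).
Local Notation ob := (ob X).

Lemma compmA (A B C E : ob) (h : hom C E) (g : hom B C) (f : hom A B) :
  (h ∘ g) ∘ f = h ∘ (g ∘ f).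
Proof. by case: HX => [[cA _] _]; rewrite cA. Qed.

Lemma id_compm (A B : ob) (f : hom A B) : idm B ∘ f = f.
Proof. by case: HX => [[_ [il _]] _]. Qed.

Lemma compm_id (A B : ob) (f : hom A B) : f ∘ idm A = f.
Proof. by case: HX => [[_ [_ ir]] _]. Qed.

Lemma terminal_unique (A : ob) (h h' : hom A term) : h = h'.
Proof.
by case: HX => [_ [_ [_ [[Hterm _] _]]]]; rewrite (Hterm _ h) (Hterm _ h').
Qed.

Lemma p1_pair (A B C : ob) (f : hom C A) (g : hom C B) : p1 ∘ pair f g = f.
Proof. by case: HX => [_ [_ [_ [[_ [p1P _]] _]]]]. Qed.

Lemma p2_pair (A B C : ob) (f : hom C A) (g : hom C B) : p2 ∘ pair f g = g.
Proof. by case: HX => [_ [_ [_ [[_ [_ [p2P _]]] _]]]]. Qed.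

Lemma pair_eta (A B C : ob) (h : hom C (prod A B)) : pair (p1 ∘ h) (p2 ∘ h) = h.
Proof. by case: HX => [_ [_ [_ [[_ [_ [_ [surj _]]]] _]]]]. Qed.

Lemma left_linear_comp (A B C : ob) (f g : hom B C) (x : hom A B) (r s : k) :
  hadd (hscale r f) (hscale s g) ∘ x = hadd (hscale r (f ∘ x)) (hscale s (g ∘ x)).
Proof. by case: HX => [_ [_ [Hll _]]]. Qed.

Lemma D_idm (A : ob) : D (idm A) = p2.
Proof. by case: HX => [_ [_ [_ [_ [[_ [_ [Did _]]] _]]]]]. Qed.

Lemma D_p1 (A B : ob) : D (@p1 _ X A B) = p1 ∘ p2.
Proof. by case: HX => [_ [_ [_ [_ [[_ [_ [_ [Dp1 _]]]] _]]]]]. Qed.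

Lemma D_p2 (A B : ob) : D (@p2 _ X A B) = p2 ∘ p2.
Proof. by case: HX => [_ [_ [_ [_ [[_ [_ [_ [_ [Dp2 _]]]]] _]]]]]. Qed.

Lemma D_pair (A B C : ob) (f : hom C A) (g : hom C B) :
  D (pair f g) = pair (D f) (D g).
Proof. by case: HX => [_ [_ [_ [_ [[_ [_ [_ [_ [_ [Dpair _]]]]]] _]]]]]. Qed.

Lemma D_comp (A B C : ob) (f : hom A B) (g : hom B C) :
  D (g ∘ f) = D g ∘ pair (f ∘ p1) (D f).
Proof. by case: HX => [_ [_ [_ [_ [[_ [_ [_ [_ [_ [_ [Dc _]]]]]]] _]]]]]. Qed.

Lemma ev_lam (C A B : ob) (f : hom (prod C A) B) : ev ∘ pair p1 (lam f ∘ p2) = f.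
Proof. by case: HX => [_ [_ [_ [_ [_ [evlam _]]]]]]. Qed.

Lemma lam_ev_eta (C A B : ob) (g : hom A (exp C B)) : lam (ev ∘ pair p1 (g ∘ p2)) = g.
Proof. by case: HX => [_ [_ [_ [_ [_ [_ [lameta _]]]]]]]. Qed.

Lemma lam_linear (C A B : ob) (f g : hom (prod C A) B) (r s : k) :
  lam (hadd (hscale r f) (hscale s g)) = hadd (hscale r (lam f)) (hscale s (lam g)).
Proof. by case: HX => [_ [_ [_ [_ [_ [_ [_ [lamlin _]]]]]]]]. Qed.

Lemma D_lam (C A B : ob) (f : hom (prod C A) B) :
  D (lam f) = lam (D f ∘ pair (pair p1 (p1 ∘ p2)) (pair hzero (p2 ∘ p2))).
Proof. by case: HX => [_ [_ [_ [_ [_ [_ [_ [_ Dlam]]]]]]]]. Qed.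

Lemma comp_pair (A B C Z : ob) (f : hom C A) (g : hom C B) (h : hom Z C) :
  pair f g ∘ h = pair (f ∘ h) (g ∘ h).
Proof. by rewrite -[LHS]pair_eta -!compmA p1_pair p2_pair. Qed.

Lemma pair_p1p2 (A B : ob) : pair (@p1 _ X A B) p2 = idm _.
Proof. by rewrite -[RHS]pair_eta !compm_id. Qed.

(* The zero map absorbs precomposition, since [0 = 0 *h 0 + 0 *h 0] in
   each hom-module and precomposition is linear. *)
Lemma zero_comp (A B Z : ob) (h : hom Z A) : (hzero : hom A B) ∘ h = hzero.
Proof.
have scale0 (P Q : ob) (f : hom P Q) : hscale 0%R f = hzero.
  by case: HX => [_ [Hmod _]]; have [_ [_ [_ [_ [_ [_ [_ [s0 _]]]]]]]] := Hmod P Q.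
have add0 (P Q : ob) (f : hom P Q) : hadd hzero f = f.
  by case: HX => [_ [Hmod _]]; have [_ [_ [z0 _]]] := Hmod P Q.
rewrite -[X in X ∘ h](add0 _ _ hzero) -{1 2}(scale0 _ _ hzero).
by rewrite left_linear_comp !scale0 add0.
Qed.

Lemma ev_pair_lam (Z C A B : ob) (f : hom (prod C A) B) (a : hom Z C) (b : hom Z A) :
  ev ∘ pair a (lam f ∘ b) = f ∘ pair a b.
Proof.
have -> : pair a (lam f ∘ b) = pair p1 (lam f ∘ p2) ∘ pair a b.
  by rewrite comp_pair p1_pair compmA p2_pair.
by rewrite -compmA ev_lam.
Qed.

Lemma ev_pair_lam_id (C A B : ob) (f : hom (prod C A) B) (a : hom A C) :
  ev ∘ pair a (lam f) = f ∘ pair a (idm _).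
Proof. by rewrite -[RHS]ev_pair_lam compm_id. Qed.

Lemma lam_comp (Z C A B : ob) (f : hom (prod C A) B) (h : hom Z A) :
  lam f ∘ h = lam (f ∘ pair p1 (h ∘ p2)).
Proof. by rewrite -[LHS]lam_ev_eta compmA ev_pair_lam. Qed.

Lemma lam_ev (C A : ob) : lam (@ev _ X C A) = idm _.
Proof. by rewrite -[RHS]lam_ev_eta id_compm pair_p1p2 compm_id. Qed.

Local Ltac cc_simpl :=
  repeat progress rewrite ?compmA ?comp_pair ?p1_pair ?p2_pair ?id_compm
    ?compm_id ?ev_pair_lam ?ev_pair_lam_id ?lam_comp ?zero_comp ?pair_p1p2
    ?lam_ev.

(* It comes from [D (lam ev) = D 1 = p2] and compatibility of D with lam. *)
Lemma D_ev_partial (C A Z : ob) (a : hom Z C) (b c : hom Z (exp C A)) :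
  D (@ev _ X C A) ∘ pair (pair a b) (pair hzero c) = ev ∘ pair a c.
Proof.
have D_ev : D (@ev _ X C A) ∘ pair (pair p1 (p1 ∘ p2)) (pair hzero (p2 ∘ p2))
            = ev ∘ pair p1 (p2 ∘ p2).
  have := D_lam (@ev _ X C A); rewrite lam_ev D_idm => Dlam_ev.
  by rewrite -[LHS]ev_lam -Dlam_ev.
have -> : pair (pair a b) (pair (hzero : hom Z C) c) =
    (pair (pair p1 (p1 ∘ p2)) (pair hzero (p2 ∘ p2))
       : hom (prod C (prod (exp C A) (exp C A))) _) ∘ pair a (pair b c).
  by cc_simpl.
by rewrite -compmA D_ev; cc_simpl.
Qed.

Lemma inverse_unique (A B : ob) (f : hom A B) (g g' : hom B A) :
  g ∘ f = idm A -> f ∘ g' = idm B -> g = g'.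
Proof. by move=> gf fg'; rewrite -[g]compm_id -fg' -compmA gf id_compm. Qed.

Variable C : ob.
Local Notation Fm := (reader_Fm C).
Local Notation eta := (reader_eta C).
Local Notation mu := (reader_mu C).

Lemma reader_endofunctor : is_endofunctor Fm.
Proof. by split=> *; rewrite /reader_Fm; cc_simpl. Qed.

(* The inverse of omega_{A,B} : [C, A x B] -> [C,A] x [C,B]:
   a pair of families is zipped into the family of pairs. *)
Definition reader_zip (A B : ob) : hom (prod (exp C A) (exp C B)) (exp C (prod A B)) :=
  lam (pair (ev ∘ pair p1 (p1 ∘ p2)) (ev ∘ pair p1 (p2 ∘ p2))).

Lemma zip_omega (A B : ob) : reader_zip A B ∘ omega Fm A B = idm _.
Proof. by rewrite /reader_zip /omega /reader_Fm; cc_simpl; rewrite pair_eta lam_ev. Qed.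

Lemma omega_zip (A B : ob) : omega Fm A B ∘ reader_zip A B = idm _.
Proof. by rewrite /reader_zip /omega /reader_Fm; cc_simpl; rewrite !lam_ev_eta pair_p1p2. Qed.

Lemma reader_terminal_iso : is_iso (bang (exp C term)).
Proof.
exists (lam (bang _)); split; last exact: terminal_unique.
by rewrite lam_comp -lam_ev; congr lam; apply: terminal_unique.
Qed.

Lemma reader_strong_linear : strong_cartesian_linear Fm.
Proof.
split; first exact: reader_endofunctor.
split; first exact: reader_terminal_iso.
split; first by move=> A B; exists (reader_zip A B); split; [apply: zip_omega | apply: omega_zip].
by move=> A B f g r s; rewrite /reader_Fm left_linear_comp lam_linear.
Qed.

Lemma reader_D_Fm (A B : ob) (f : hom A B) : D (Fm _ _ f) = Fm _ _ (D f) ∘ reader_zip A A.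
Proof.
by rewrite /reader_Fm /reader_zip D_lam D_comp; cc_simpl; rewrite ?D_ev_partial; cc_simpl.
Qed.

Lemma reader_strong_differential : strong_cartesian_differential Fm.
Proof.
split; first exact: reader_strong_linear.
move=> A B f w w_omega omega_w.
by rewrite (inverse_unique w_omega (omega_zip A A)) reader_D_Fm.
Qed.

Lemma reader_monad : is_monad Fm mu eta.
Proof.
split; first exact: reader_endofunctor.
by rewrite /reader_mu /reader_eta /reader_Fm; do !split=> *; cc_simpl.
Qed.

(* eta and mu are D-linear: constant families and diagonals of families
   of families are linear operations. *)
Lemma reader_eta_D_linear (A : ob) : D_linear (eta A).
Proof. by rewrite /D_linear /reader_eta D_lam D_p2; cc_simpl. Qed.

Lemma reader_mu_D_linear (A : ob) : D_linear (mu A).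
Proof.
rewrite /D_linear /reader_mu D_lam D_comp D_pair D_p1; cc_simpl.
by rewrite ?D_ev_partial; cc_simpl.
Qed.

End ReaderMonad.

Theorem mainTheorem4 (k : comPzSemiRingType) (X : ccdc_data k)
  (HX : is_CCDC X) (C : ob X) :
  is_cart_diff_monad (reader_Fo C) (reader_Fm C) (reader_mu C) (reader_eta C).
Proof.
split; first exact: reader_monad.
split; first exact: reader_strong_differential.
split; [exact: reader_eta_D_linear | exact: reader_mu_D_linear].
Qed.
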